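(* Let $n\ge 2$ be an integer and let $(x_0,y_0),\dots,(x_n,y_n)\in\mathbb{R}^2$ with $a:=x_0<x_1<\dots<x_n=:b$. For each $k\in\{1,\dots,n\}$ fix $d_k\in[0,1)$ and put \[ a_k=\frac{x_k-x_{k-1}}{x_n-x_0},\quad b_k=\frac{x_nx_{k-1}-x_0x_k}{x_n-x_0},\quad c_k=\frac{y_k-y_{k-1}}{x_n-x_0}-d_k\frac{y_n-y_0}{x_n-x_0},\quad e_k=\frac{x_ny_{k-1}-x_0y_k}{x_n-x_0}-d_k\frac{x_ny_0-x_0y_n}{x_n-x_0}, \] and $f_k(x,y)=(a_kx+b_k,\;c_kx+d_ky+e_k)$ for $(x,y)\in\mathbb{R}^2$. Let $\theta=1$ if $c_1=\dots=c_n=0$ and $\theta=\dfrac{1-\max_k a_k}{2\max_k|c_k|}$ otherwise. Let $f:[a,b]\to\mathbb{R}$ be the affine fractal interpolation function associated with these data, and $G_f=\{(x,f(x)):x\in[a,b]\}$ its graph. For $k\in\{1,\dots,n\}$ set \[ \gamma_k=\left(\frac{b_k}{1-a_k},\ \frac{b_kc_k}{(1-a_k)(1-d_k)}+\frac{e_k}{1-d_k}\right),\qquad s_k=\max\{a_k+\theta|c_k|,\,d_k\}, \] and \[ M=\max_{i,j\in\{1,\dots,n\}}\left\{\left|\frac{b_i}{1-a_i}-\frac{b_j}{1-a_j}\right|+\theta\left|\frac{c_ib_i}{(1-a_i)(1-d_i)}+\frac{e_i}{1-d_i}-\frac{c_jb_j}{(1-a_j)(1-d_j)}-\frac{e_j}{1-d_j}\right|\right\}.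 \] Let $\sigma$ be a permutation of $\{1,\dots,n\}$ with $s_{\sigma(1)}\le s_{\sigma(2)}\le\dots\le s_{\sigma(n)}$. Then \[ G_f\subseteq\left(\bigcup_{j=1}^{n-1}R\!\left[\gamma_{\sigma(j)},\,Ms_{\sigma(j)}\frac{1+s_{\sigma(n)}}{1-s_{\sigma(n-1)}s_{\sigma(n)}}\right]\right)\cup R\!\left[\gamma_{\sigma(n)},\,Ms_{\sigma(n)}\frac{1+s_{\sigma(n-1)}}{1-s_{\sigma(n-1)}s_{\sigma(n)}}\right]. \]
   Context: For $(x,y)\in\mathbb{R}^2$ and $r\ge0$, $R[(x,y),r]=\{(u,v)\in\mathbb{R}^2: |x-u|+\theta|y-v|\le r\}$ (the closed ball of radius $r$ for the metric $\rho((u_1,v_1),(u_2,v_2))=|u_1-u_2|+\theta|v_1-v_2|$; it is the filled rhombus with vertices $(x\pm r,y)$, $(x,y\pm r/\theta)$). The maps $f_k$ are contractions for $\rho$, and the attractor of the iterated function system $\{f_1,\dots,f_n\}$ is the unique nonempty compact set $K\subseteq\mathbb{R}^2$ with $K=\bigcup_{k=1}^n f_k(K)$. The affine fractal interpolation function is the continuous function $f:[a,b]\to\mathbb{R}$ with $f(x_k)=y_k$ for all $k\in\{0,\dots,n\}$ whose graph $G_f$ equals this attractor. Note $\gamma_k$ is the unique fixed point of $f_k$ and $s_k$ is the Lipschitz constant of $f_k$ with respect to $\rho$. *)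

From Stdlib Require Import Reals Lra Lia List ClassicalEpsilon.
Import ListNotations.
Open Scope R_scope.

(* maximum of g k over k = 1..n (n >= 1 intended) *)
Definition maxk (n : nat) (g : nat -> R) : R :=
  fold_right (fun k acc => Rmax (g k) acc) (g 1%nat) (seq 1 n).

Section FIF.
Variables (n : nat) (x y d : nat -> R).

Definition ak (k : nat) : R := (x k - x (k-1)%nat) / (x n - x 0%nat).
Definition bk (k : nat) : R := (x n * x (k-1)%nat - x 0%nat * x k) / (x n - x 0%nat).
Definition ck (k : nat) : R :=
  (y k - y (k-1)%nat) / (x n - x 0%nat) - d k * ((y n - y 0%nat) / (x n - x 0%nat)).
Definition ek (k : nat) : R :=
  (x n * y (k-1)%nat - x 0%nat * y k) / (x n - x 0%nat)
  - d k * ((x n * y 0%nat - x 0%nat * y n) / (x n - x 0%nat)).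

Definition fk (k : nat) (p : R * R) : R * R :=
  (ak k * fst p + bk k, ck k * fst p + d k * snd p + ek k).

Definition theta : R :=
  if excluded_middle_informative (forall k, (1 <= k <= n)%nat -> ck k = 0)
  then 1
  else (1 - maxk n ak) / (2 * maxk n (fun k => Rabs (ck k))).

(* fixed point gamma_k of f_k *)
Definition gamma (k : nat) : R * R :=
  (bk k / (1 - ak k),
   bk k * ck k / ((1 - ak k) * (1 - d k)) + ek k / (1 - d k)).

Definition sk (k : nat) : R := Rmax (ak k + theta * Rabs (ck k)) (d k).

Definition Mconst : R :=
  maxk n (fun i => maxk n (fun j =>
    Rabs (bk i / (1 - ak i) - bk j / (1 - ak j))
    + theta * Rabs (ck i * bk i / ((1 - ak i) * (1 - d i)) + ek i / (1 - d i)
                    - ck j * bk j / ((1 - ak j) * (1 - d j)) - ek j / (1 - d j)))).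

Definition Rball (c : R * R) (r : R) (p : R * R) : Prop :=
  Rabs (fst p - fst c) + theta * Rabs (snd p - snd c) <= r.

(* f is the affine fractal interpolation function of the data:
   continuous on [x_0, x_n], interpolates, and its graph is invariant
   under the IFS {f_1,...,f_n} (hence is its attractor). *)
Definition graph (f : R -> R) (p : R * R) : Prop :=
  x 0%nat <= fst p <= x n /\ snd p = f (fst p).

Definition is_affine_FIF (f : R -> R) : Prop :=
  (forall t, x 0%nat <= t <= x n ->
     limit1_in f (fun u => x 0%nat <= u <= x n) (f t) t) /\
  (forall k, (k <= n)%nat -> f (x k) = y k) /\
  (forall p, graph f p <->
     exists k, (1 <= k <= n)%nat /\ exists q, graph f q /\ p = fk k q).

End FIF.

From Stdlib Require Import Reals Lra Lia List ClassicalEpsilon Classical.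
Open Scope R_scope.

(* Each f_k is an s_k-contraction for rho with fixed point gamma_k, and G_f is
   the union of the f_k(G_f).  If every point of G_f lies within r_k of gamma_k
   for all k, then f_j(q) lies within s_j r_j + rho(gamma_j, gamma_i) of gamma_i.
   With A at sigma(n) and B elsewhere, where M + s_sigma(n) A = B and
   M + s_sigma(n-1) B = A, this step preserves the radii; since G_f is bounded,
   iterating it from a crude bound makes the excess decay geometrically, so G_f
   lies within these radii, and one more application of f_k yields the balls of
   radius s_k r_k. *)

Lemma le_of_le_add_geometric (u v s t : R) :
  0 <= s < 1 -> (forall m, u <= v + s ^ m * t) -> u <= v.
Proof.
  intros Hs Hle; apply Rnot_lt_le; intros Hlt.
  destruct (Rle_or_lt t 0) as [Ht | Ht].
  - specialize (Hle O); simpl in Hle; lra.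
  - destruct (pow_lt_1_zero s ltac:(rewrite Rabs_right; lra) ((u - v) / t)
               ltac:(apply Rdiv_lt_0_compat; lra)) as [N HN].
    specialize (HN N (le_n N)); specialize (Hle N).
    rewrite Rabs_right in HN by (apply Rle_ge, pow_le; lra).
    apply (Rmult_lt_compat_r t) in HN; [|lra].
    unfold Rdiv in HN; rewrite Rmult_assoc, Rinv_l in HN by lra; lra.
Qed.

Section InvariantSetNearFixedPoints.

Variables (P K : Type) (dist : P -> P -> R).
Variables (idx : K -> Prop) (F : K -> P -> P) (fix_pt : K -> P).
Variables (lip bnd : K -> R) (G : P -> Prop) (s t : R).

Hypothesis dist_triangle : forall p q r, dist p r <= dist p q + dist q r.
Hypothesis F_contracts_to_fix :
  forall k q, idx k -> dist (F k q) (fix_pt k) <= lip k * dist q (fix_pt k).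
Hypothesis lip_bounds : forall k, idx k -> 0 <= lip k <= s.
Hypothesis s_lt_1 : s < 1.
Hypothesis G_sub_images : forall p, G p -> exists k, idx k /\ exists q, G q /\ p = F k q.
Hypothesis t_nonneg : 0 <= t.
Hypothesis G_bounded : forall k q, idx k -> G q -> dist q (fix_pt k) <= t.
Hypothesis bnd_nonneg : forall k, idx k -> 0 <= bnd k.
Hypothesis bnd_step :
  forall i j, idx i -> idx j -> lip j * bnd j + dist (fix_pt j) (fix_pt i) <= bnd i.

Lemma invariant_dist_fix_le_geometric m :
  forall k q, idx k -> G q -> dist q (fix_pt k) <= bnd k + s ^ m * t.
Proof.
  induction m as [|m IH]; intros k q Hk Hq.
  - simpl; specialize (G_bounded k q Hk Hq); specialize (bnd_nonneg k Hk); lra.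
  - destruct (G_sub_images q Hq) as [j [Hj [q' [Hq' ->]]]].
    specialize (IH j q' Hj Hq'); specialize (lip_bounds j Hj).
    assert (Hstep := bnd_step k j Hk Hj).
    assert (Hcontr := F_contracts_to_fix j q' Hj).
    assert (Hlip : lip j * dist q' (fix_pt j) <= lip j * (bnd j + s ^ m * t))
      by (apply Rmult_le_compat_l; lra).
    assert (Hgeo : lip j * (s ^ m * t) <= s ^ S m * t).
    { simpl; rewrite Rmult_assoc.
      apply Rmult_le_compat_r; [apply Rmult_le_pos; [apply pow_le|]|]; lra. }
    specialize (dist_triangle (F j q') (fix_pt j) (fix_pt k)); lra.
Qed.

Lemma invariant_dist_fix_le k q : idx k -> G q -> dist q (fix_pt k) <= bnd k.
Proof.
  intros Hk Hq; apply (le_of_le_add_geometric _ _ s t).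
  - destruct (G_sub_images q Hq) as [j [Hj _]]; specialize (lip_bounds j Hj); lra.
  - intros m; apply invariant_dist_fix_le_geometric; assumption.
Qed.

Lemma invariant_in_fix_balls p :
  G p -> exists k, idx k /\ dist p (fix_pt k) <= lip k * bnd k.
Proof.
  intros Hp; destruct (G_sub_images p Hp) as [k [Hk [q [Hq ->]]]].
  exists k; split; [assumption|].
  eapply Rle_trans; [apply F_contracts_to_fix; assumption|].
  apply Rmult_le_compat_l; [apply lip_bounds; assumption|].
  apply invariant_dist_fix_le; assumption.
Qed.

End InvariantSetNearFixedPoints.

Lemma maxk_ge n g k : (1 <= k <= n)%nat -> g k <= maxk n g.
Proof.
  intros Hk; unfold maxk.
  assert (Hin : In k (seq 1 n)) by (apply in_seq; lia).
  generalize (g 1%nat); induction (seq 1 n) as [|a l IH]; simpl; intros b;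
    [contradiction|].
  destruct Hin as [<- | Hin]; [apply Rmax_l|].
  eapply Rle_trans; [apply IH, Hin | apply Rmax_r].
Qed.

Lemma maxk_lt n g c :
  (1 <= n)%nat -> (forall k, (1 <= k <= n)%nat -> g k < c) -> maxk n g < c.
Proof.
  intros Hn Hlt; unfold maxk.
  assert (Hl : forall k, In k (seq 1 n) -> g k < c)
    by (intros k Hk; apply in_seq in Hk; apply Hlt; lia).
  induction (seq 1 n) as [|a l IH]; simpl; [apply Hlt; lia|].
  apply Rmax_lub_lt; [apply Hl; left | apply IH; intros; apply Hl; right]; auto.
Qed.

Lemma injective_on_range_surjective n (sigma : nat -> nat) :
  (forall i, (1 <= i <= n)%nat -> (1 <= sigma i <= n)%nat) ->
  (forall i j, (1 <= i <= n)%nat -> (1 <= j <= n)%nat -> sigma i = sigma j -> i = j) ->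
  forall j, (1 <= j <= n)%nat -> exists i, (1 <= i <= n)%nat /\ sigma i = j.
Proof.
  intros Hrange Hinj j Hj.
  assert (Hnodup : NoDup (map sigma (seq 1 n))).
  { apply NoDup_map_NoDup_ForallPairs; [|apply seq_NoDup].
    intros a b Ha Hb; apply in_seq in Ha; apply in_seq in Hb; apply Hinj; lia. }
  assert (Hincl : incl (seq 1 n) (map sigma (seq 1 n))).
  { apply NoDup_length_incl; [assumption | rewrite length_map; lia |].
    intros z Hz; apply in_map_iff in Hz; destruct Hz as [i [<- Hi]].
    apply in_seq in Hi; apply in_seq; specialize (Hrange i); lia. }
  destruct (proj1 (in_map_iff _ _ _) (Hincl j ltac:(apply in_seq; lia)))
    as [i [Hi Hin]].
  apply in_seq in Hin; exists i; split; [lia | assumption].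
Qed.

Definition clamp (a b u : R) : R := Rmax a (Rmin u b).

Lemma clamp_in a b u : a <= b -> a <= clamp a b u <= b.
Proof. intros; unfold clamp, Rmax, Rmin; repeat destruct Rle_dec; lra. Qed.

Lemma clamp_id a b u : a <= u <= b -> clamp a b u = u.
Proof. intros; unfold clamp, Rmax, Rmin; repeat destruct Rle_dec; lra. Qed.

Lemma clamp_lipschitz a b u v :
  a <= b -> Rabs (clamp a b u - clamp a b v) <= Rabs (u - v).
Proof.
  intros; unfold clamp, Rmax, Rmin; repeat destruct Rle_dec;
    unfold Rabs; repeat destruct Rcase_abs; lra.
Qed.

(* [f] is only continuous within [a, b]; composing with [clamp a b] makes it
   continuous at every point of [a, b], so the extreme value theorem applies. *)
Lemma continuous_on_interval_bounded a b (f : R -> R) : a <= b ->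
  (forall t, a <= t <= b -> limit1_in f (fun u => a <= u <= b) (f t) t) ->
  exists B, forall t, a <= t <= b -> Rabs (f t) <= B.
Proof.
  intros Hab Hf.
  set (g u := f (clamp a b u)).
  assert (Hg : forall c, a <= c <= b -> continuity_pt g c).
  { intros c _ eps Heps.
    destruct (Hf (clamp a b c) (clamp_in a b c Hab) eps Heps) as [alp [Halp H]].
    exists alp; split; [assumption|].
    intros u [_ Hu]; apply H; split; [apply clamp_in, Hab|].
    simpl in *; unfold R_dist in *.
    eapply Rle_lt_trans; [apply clamp_lipschitz, Hab | exact Hu]. }
  destruct (continuity_ab_maj g a b Hab Hg) as [tmax [Hmax _]].
  destruct (continuity_ab_min g a b Hab Hg) as [tmin [Hmin _]].
  exists (Rabs (g tmax) + Rabs (g tmin)); intros t Ht.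
  specialize (Hmax t Ht); specialize (Hmin t Ht).
  unfold g in *; rewrite (clamp_id a b t Ht) in Hmax, Hmin.
  revert Hmax Hmin; generalize (f t) (f (clamp a b tmax)) (f (clamp a b tmin)).
  intros; unfold Rabs; repeat destruct Rcase_abs; lra.
Qed.

Definition rho (n : nat) (x y d : nat -> R) (p q : R * R) : R :=
  Rabs (fst p - fst q) + theta n x y d * Rabs (snd p - snd q).

Section AffineFIF.

Variables (n : nat) (x y d : nat -> R).
Hypothesis n_ge_2 : (2 <= n)%nat.
Hypothesis x_increasing : forall k, (k < n)%nat -> x k < x (S k).
Hypothesis d_bounds : forall k, (1 <= k <= n)%nat -> 0 <= d k < 1.

Lemma x_lt i j : (i < j <= n)%nat -> x i < x j.
Proof.
  induction j as [|j IH]; intros Hij; [lia|].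
  destruct (Nat.eq_dec i j) as [->|]; [apply x_increasing; lia|].
  apply Rlt_trans with (x j); [apply IH | apply x_increasing]; lia.
Qed.

Lemma x_le i j : (i <= j <= n)%nat -> x i <= x j.
Proof.
  intros Hij; destruct (Nat.eq_dec i j) as [->|]; [lra|].
  left; apply x_lt; lia.
Qed.

Lemma ak_pos k : (1 <= k <= n)%nat -> 0 < ak n x k.
Proof.
  intros Hk; unfold ak.
  assert (x (k - 1)%nat < x k) by (apply x_lt; lia).
  assert (x 0%nat < x n) by (apply x_lt; lia).
  apply Rdiv_lt_0_compat; lra.
Qed.

Lemma ak_lt_1 k : (1 <= k <= n)%nat -> ak n x k < 1.
Proof.
  intros Hk; unfold ak.
  assert (x 0%nat <= x (k - 1)%nat) by (apply x_le; lia).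
  assert (x k <= x n) by (apply x_le; lia).
  assert (Hstrict : x 0%nat < x (k - 1)%nat \/ x k < x n).
  { destruct (Nat.eq_dec k 1) as [->|]; [right | left]; apply x_lt; lia. }
  assert (x 0%nat < x n) by (apply x_lt; lia).
  apply (Rmult_lt_reg_r (x n - x 0%nat)); [lra|].
  unfold Rdiv; rewrite Rmult_assoc, Rinv_l by lra; destruct Hstrict; lra.
Qed.

Lemma maxk_ak_lt_1 : maxk n (ak n x) < 1.
Proof. apply maxk_lt; [lia | apply ak_lt_1]. Qed.

Lemma maxk_abs_ck_pos :
  ~ (forall k, (1 <= k <= n)%nat -> ck n x y d k = 0) ->
  0 < maxk n (fun k => Rabs (ck n x y d k)).
Proof.
  intros Hc; destruct (not_all_ex_not _ _ Hc) as [k Hk].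
  apply imply_to_and in Hk as [Hk Hck].
  apply Rlt_le_trans with (Rabs (ck n x y d k));
    [apply Rabs_pos_lt, Hck | apply (maxk_ge n (fun k => Rabs (ck n x y d k)) k Hk)].
Qed.

Lemma theta_nonneg : 0 <= theta n x y d.
Proof.
  unfold theta; destruct excluded_middle_informative as [_|Hc]; [lra|].
  pose proof maxk_ak_lt_1; pose proof (maxk_abs_ck_pos Hc).
  apply Rle_mult_inv_pos; lra.
Qed.

Lemma ak_add_theta_abs_ck_lt_1 k :
  (1 <= k <= n)%nat -> ak n x k + theta n x y d * Rabs (ck n x y d k) < 1.
Proof.
  intros Hk; pose proof maxk_ak_lt_1.
  assert (Hak : ak n x k <= maxk n (ak n x)) by (apply maxk_ge, Hk).
  unfold theta; destruct excluded_middle_informative as [Hc|Hc].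
  - rewrite (Hc k Hk), Rabs_R0; lra.
  - set (mc := maxk n (fun k => Rabs (ck n x y d k))).
    assert (Hmc : 0 < mc) by apply (maxk_abs_ck_pos Hc).
    assert (Hck : Rabs (ck n x y d k) <= mc)
      by apply (maxk_ge n (fun k => Rabs (ck n x y d k)) k Hk).
    assert ((1 - maxk n (ak n x)) / (2 * mc) * Rabs (ck n x y d k)
            <= (1 - maxk n (ak n x)) / 2).
    { replace ((1 - maxk n (ak n x)) / 2)
        with ((1 - maxk n (ak n x)) / (2 * mc) * mc) by (field; lra).
      apply Rmult_le_compat_l; [apply Rle_mult_inv_pos|]; lra. }
    lra.
Qed.

Lemma sk_bounds k : (1 <= k <= n)%nat -> 0 <= sk n x y d k < 1.
Proof.
  intros Hk; specialize (d_bounds k Hk); unfold sk; split.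
  - apply Rle_trans with (d k); [lra | apply Rmax_r].
  - apply Rmax_lub_lt; [apply ak_add_theta_abs_ck_lt_1, Hk | lra].
Qed.

Lemma rho_triangle p q r : rho n x y d p r <= rho n x y d p q + rho n x y d q r.
Proof.
  unfold rho; pose proof theta_nonneg.
  assert (H1 := Rabs_triang (fst p - fst q) (fst q - fst r)).
  assert (H2 := Rabs_triang (snd p - snd q) (snd q - snd r)).
  replace (fst p - fst q + (fst q - fst r)) with (fst p - fst r) in H1 by ring.
  replace (snd p - snd q + (snd q - snd r)) with (snd p - snd r) in H2 by ring.
  apply (Rmult_le_compat_l (theta n x y d)) in H2; lra.
Qed.

Lemma rho_refl p : rho n x y d p p = 0.
Proof. unfold rho; rewrite !Rminus_diag, Rabs_R0; ring. Qed.

Lemma fk_lipschitz k p q : (1 <= k <= n)%nat ->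
  rho n x y d (fk n x y d k p) (fk n x y d k q) <= sk n x y d k * rho n x y d p q.
Proof.
  intros Hk; unfold rho, fk, sk; simpl.
  pose proof (ak_pos k Hk); pose proof (d_bounds k Hk); pose proof theta_nonneg.
  set (a := ak n x k) in *; set (c := ck n x y d k); set (t := theta n x y d) in *.
  set (u := fst p - fst q); set (v := snd p - snd q).
  replace (a * fst p + bk n x k - (a * fst q + bk n x k)) with (a * u)
    by (unfold u; ring).
  replace (c * fst p + d k * snd p + ek n x y d k - (c * fst q + d k * snd q + ek n x y d k))
    with (c * u + d k * v) by (unfold u, v; ring).
  assert (Hcv := Rabs_triang (c * u) (d k * v)).
  rewrite !Rabs_mult in Hcv; rewrite Rabs_mult, (Rabs_right a) by lra.
  rewrite (Rabs_right (d k)) in Hcv by lra.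
  assert (Hl := Rmax_l (a + t * Rabs c) (d k)).
  assert (Hr := Rmax_r (a + t * Rabs c) (d k)).
  pose proof (Rabs_pos u); pose proof (Rabs_pos v); pose proof (Rabs_pos c).
  apply (Rmult_le_compat_l t) in Hcv; [|lra].
  assert ((a + t * Rabs c) * Rabs u <= Rmax (a + t * Rabs c) (d k) * Rabs u)
    by (apply Rmult_le_compat_r; lra).
  assert (d k * (t * Rabs v) <= Rmax (a + t * Rabs c) (d k) * (t * Rabs v))
    by (apply Rmult_le_compat_r; [apply Rmult_le_pos|]; lra).
  nra.
Qed.

Lemma gamma_fixed k : (1 <= k <= n)%nat -> fk n x y d k (gamma n x y d k) = gamma n x y d k.
Proof.
  intros Hk; pose proof (ak_lt_1 k Hk); pose proof (d_bounds k Hk).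
  unfold fk, gamma; simpl; f_equal; field; lra.
Qed.

Lemma fk_contracts_to_gamma k q : (1 <= k <= n)%nat ->
  rho n x y d (fk n x y d k q) (gamma n x y d k) <= sk n x y d k * rho n x y d q (gamma n x y d k).
Proof.
  intros Hk; rewrite <- (gamma_fixed k Hk) at 1; apply fk_lipschitz, Hk.
Qed.

Lemma rho_gamma_le_Mconst i j : (1 <= i <= n)%nat -> (1 <= j <= n)%nat ->
  rho n x y d (gamma n x y d i) (gamma n x y d j) <= Mconst n x y d.
Proof.
  intros Hi Hj.
  eapply Rle_trans; [|apply (maxk_ge n _ i Hi)].
  eapply Rle_trans; [|apply (maxk_ge n _ j Hj)].
  unfold rho, gamma; simpl; right.
  do 3 f_equal; unfold Rdiv; ring.
Qed.

Lemma Mconst_nonneg : 0 <= Mconst n x y d.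
Proof.
  rewrite <- (rho_refl (gamma n x y d 1%nat)); apply rho_gamma_le_Mconst; lia.
Qed.

Lemma graph_rho_gamma_bounded (f : R -> R) : is_affine_FIF n x y d f ->
  exists t, 0 <= t /\ forall k q, (1 <= k <= n)%nat -> graph n x f q ->
    rho n x y d q (gamma n x y d k) <= t.
Proof.
  intros [Hcont _].
  assert (Hx0n : x 0%nat <= x n) by (apply x_le; lia).
  destruct (continuous_on_interval_bounded (x 0%nat) (x n) f Hx0n Hcont) as [B HB].
  set (o := (0, 0)).
  exists (Rmax 0 (Rabs (x 0%nat) + Rabs (x n) + theta n x y d * B
                  + maxk n (fun k => rho n x y d o (gamma n x y d k)))).
  split; [apply Rmax_l|]; intros k q Hk [Hq1 Hq2].
  eapply Rle_trans; [|apply Rmax_r].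
  eapply Rle_trans; [apply (rho_triangle q o)|].
  apply Rplus_le_compat; [|apply (maxk_ge n (fun k => rho n x y d o (gamma n x y d k)) k Hk)].
  unfold rho, o; simpl; rewrite !Rminus_0_r.
  apply Rplus_le_compat.
  - unfold Rabs; repeat destruct Rcase_abs; lra.
  - apply Rmult_le_compat_l; [apply theta_nonneg|]; rewrite Hq2; apply HB, Hq1.
Qed.

Section SortedRatios.

Variable sigma : nat -> nat.
Hypothesis sigma_range : forall i, (1 <= i <= n)%nat -> (1 <= sigma i <= n)%nat.
Hypothesis sigma_inj : forall i j, (1 <= i <= n)%nat -> (1 <= j <= n)%nat ->
  sigma i = sigma j -> i = j.
Hypothesis sigma_sorted : forall i j, (1 <= i <= j)%nat -> (j <= n)%nat ->
  sk n x y d (sigma i) <= sk n x y d (sigma j).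

Lemma sk_le_top k : (1 <= k <= n)%nat -> sk n x y d k <= sk n x y d (sigma n).
Proof.
  intros Hk; destruct (injective_on_range_surjective n sigma sigma_range sigma_inj k Hk)
    as [i [Hi <-]].
  apply sigma_sorted; lia.
Qed.

Lemma sk_le_next k : (1 <= k <= n)%nat -> k <> sigma n ->
  sk n x y d k <= sk n x y d (sigma (n - 1)%nat).
Proof.
  intros Hk Hkn; destruct (injective_on_range_surjective n sigma sigma_range sigma_inj k Hk)
    as [i [Hi <-]].
  assert (i <> n) by (intros ->; contradiction).
  apply sigma_sorted; lia.
Qed.

Definition graph_radius (k : nat) : R :=
  let s := sk n x y d (sigma n) in
  let s' := sk n x y d (sigma (n - 1)%nat) in
  if Nat.eq_dec k (sigma n)
  then Mconst n x y d * ((1 + s') / (1 - s' * s))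
  else Mconst n x y d * ((1 + s) / (1 - s' * s)).

Lemma graph_radius_nonneg k : 0 <= graph_radius k.
Proof.
  assert (Hs := sk_bounds (sigma n) ltac:(apply sigma_range; lia)).
  assert (Hs' := sk_bounds (sigma (n - 1)%nat) ltac:(apply sigma_range; lia)).
  pose proof Mconst_nonneg.
  unfold graph_radius; destruct Nat.eq_dec;
    (apply Rmult_le_pos; [assumption | apply Rle_mult_inv_pos; nra]).
Qed.

Lemma graph_radius_step i j : (1 <= i <= n)%nat -> (1 <= j <= n)%nat ->
  sk n x y d j * graph_radius j + rho n x y d (gamma n x y d j) (gamma n x y d i)
  <= graph_radius i.
Proof.
  intros Hi Hj; destruct (Nat.eq_dec i j) as [<- | Hij].
  - rewrite rho_refl; pose proof (sk_bounds i Hi); pose proof (graph_radius_nonneg i); nra.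
  - assert (HM := rho_gamma_le_Mconst j i Hj Hi); pose proof Mconst_nonneg.
    assert (Hs := sk_bounds (sigma n) ltac:(apply sigma_range; lia)).
    assert (Hs' := sk_bounds (sigma (n - 1)%nat) ltac:(apply sigma_range; lia)).
    assert (Hs's : sk n x y d (sigma (n - 1)%nat) <= sk n x y d (sigma n))
      by (apply sigma_sorted; lia).
    assert (Hsj := sk_bounds j Hj).
    unfold graph_radius in *.
    set (s := sk n x y d (sigma n)) in *; set (s' := sk n x y d (sigma (n - 1)%nat)) in *.
    set (M := Mconst n x y d) in *.
    assert (Hden : 0 < 1 - s' * s) by nra.
    assert (HA : M + s * (M * ((1 + s') / (1 - s' * s))) = M * ((1 + s) / (1 - s' * s)))
      by (field; lra).
    assert (HB : M + s' * (M * ((1 + s) / (1 - s' * s))) = M * ((1 + s') / (1 - s' * s)))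
      by (field; lra).
    assert (HAB : M * ((1 + s') / (1 - s' * s)) <= M * ((1 + s) / (1 - s' * s))).
    { apply Rmult_le_compat_l; [assumption|].
      unfold Rdiv; apply Rmult_le_compat_r; [left; apply Rinv_0_lt_compat|]; lra. }
    assert (HB0 : 0 <= M * ((1 + s) / (1 - s' * s)))
      by (apply Rmult_le_pos; [|apply Rle_mult_inv_pos]; lra).
    destruct (Nat.eq_dec j (sigma n)) as [Ej | Ej].
    + subst j; destruct (Nat.eq_dec i (sigma n)); [contradiction | fold s; lra].
    + assert (sk n x y d j <= s') by (apply sk_le_next; assumption).
      destruct (Nat.eq_dec i (sigma n)); nra.
Qed.

End SortedRatios.

End AffineFIF.

Theorem theorem3p1 (n : nat) (x y d : nat -> R) (f : R -> R) (sigma : nat -> nat) :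
  (2 <= n)%nat ->
  (forall k, (k < n)%nat -> x k < x (S k)) ->
  (forall k, (1 <= k <= n)%nat -> 0 <= d k < 1) ->
  is_affine_FIF n x y d f ->
  (forall i, (1 <= i <= n)%nat -> (1 <= sigma i <= n)%nat) ->
  (forall i j, (1 <= i <= n)%nat -> (1 <= j <= n)%nat -> sigma i = sigma j -> i = j) ->
  (forall i j, (1 <= i <= j)%nat -> (j <= n)%nat ->
     sk n x y d (sigma i) <= sk n x y d (sigma j)) ->
  let s := sk n x y d in
  let M := Mconst n x y d in
  let sn := s (sigma n) in
  let sn1 := s (sigma (n - 1)%nat) in
  forall p, graph n x f p ->
    (exists j, (1 <= j <= n - 1)%nat /\
       Rball n x y d (gamma n x y d (sigma j)) (M * s (sigma j) * ((1 + sn) / (1 - sn1 * sn))) p)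
    \/ Rball n x y d (gamma n x y d (sigma n)) (M * sn * ((1 + sn1) / (1 - sn1 * sn))) p.
Proof.
  intros Hn Hx Hd HF Hrange Hinj Hsorted s M sn sn1 p Hp.
  destruct (graph_rho_gamma_bounded n x y d Hn Hx f HF) as [t [Ht Hbounded]].
  assert (Hsn := sk_bounds n x y d Hn Hx Hd (sigma n) ltac:(apply Hrange; lia)).
  assert (Hballs : exists k, (1 <= k <= n)%nat /\
            rho n x y d p (gamma n x y d k) <= s k * graph_radius n x y d sigma k).
  { apply (invariant_in_fix_balls _ _ _ (fun k => (1 <= k <= n)%nat) (fk n x y d) _ _ _
             (graph n x f) sn t).
    - exact (rho_triangle n x y d Hn Hx).
    - intros k q Hk; apply fk_contracts_to_gamma; assumption.
    - intros k Hk; split; [apply sk_bounds | apply sk_le_top]; assumption.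
    - apply Hsn.
    - intros q Hq; apply HF, Hq.
    - exact Ht.
    - exact Hbounded.
    - intros k _; apply graph_radius_nonneg; assumption.
    - intros i j Hi Hj; apply graph_radius_step; assumption.
    - exact Hp. }
  destruct Hballs as [k [Hk Hball]].
  destruct (injective_on_range_surjective n sigma Hrange Hinj k Hk) as [i [Hi <-]].
  unfold graph_radius in Hball; unfold Rball.
  destruct (Nat.eq_dec i n) as [-> | Hin].
  - right; destruct Nat.eq_dec; [|contradiction].
    replace (M * sn * _) with (sn * (M * ((1 + sn1) / (1 - sn1 * sn)))) by ring; exact Hball.
  - left; exists i; split; [lia|].
    destruct Nat.eq_dec as [E|_]; [apply Hinj in E; lia|].
    replace (M * _ * _) with (s (sigma i) * (M * ((1 + sn) / (1 - sn1 * sn)))) by ring.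
    exact Hball.
Qed.
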